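(* Let $M$ be a paving matroid with $\gamma(M) = \beta(E(M))$, $|E(M)| \ge 2r(M)+2$ and $r(M) \ge 3$. Then there is a basis $B$ of $M$ such that $\gamma(M\backslash B) = \beta(E(M) - B)$ and $r(M\backslash B) = r(M)$.
   Context: A matroid $M$ of rank $r$ is a paving matroid if every circuit of $M$ has at least $r$ elements. For $\emptyset \ne X \subseteq E(M)$, $\beta(X) := |X|/r(X)$ if $r(X) \neq 0$ and $\beta(X) := \infty$ if $r(X)=0$; and $\gamma(N) := \max_{\emptyset \ne X \subseteq E(N)} \beta(X)$ for a matroid $N$ (with $\beta$ computed using the rank function of $N$). $M\backslash B$ denotes the deletion of $B$ from $M$. *)

From HB Require Import structures.
From mathcomp Require Import all_boot all_order all_algebra.
From mathcomp Require Import constructive_ereal.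
Set Implicit Arguments. Unset Strict Implicit. Unset Printing Implicit Defensive.
Import Order.TTheory GRing.Theory Num.Theory.

Record matroid (T : finType) := Matroid {
  ground : {set T};
  rk : {set T} -> nat;
  rk_le_card : forall X : {set T}, X \subset ground -> (rk X <= #|X|)%N;
  rk_mono : forall X Y : {set T}, X \subset Y -> Y \subset ground -> (rk X <= rk Y)%N;
  rk_submod : forall X Y : {set T}, X \subset ground -> Y \subset ground ->
      (rk (X :|: Y) + rk (X :&: Y) <= rk X + rk Y)%N
}.

Section Matroids.
Variable T : finType.
Implicit Types (M : matroid T) (X B C : {set T}).

Definition rank M : nat := rk M (ground M).

Definition indep M X : bool := (X \subset ground M) && (rk M X == #|X|).

Definition circuit M C : Prop :=
  [/\ C \subset ground M, ~~ indep M C & forall x, x \in C -> indep M (C :\ x)].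

Definition basis M B : Prop :=
  indep M B /\ forall x, x \in ground M -> x \notin B -> ~~ indep M (x |: B).

Definition paving M : Prop := forall C, circuit M C -> (rank M <= #|C|)%N.

Lemma delete_subset M B X : X \subset ground M :\: B -> X \subset ground M.
Proof. by move=> H; apply: subset_trans H (subsetDl _ _). Qed.

Definition delete M B : matroid T :=
  @Matroid T (ground M :\: B) (rk M)
    (fun X HX => rk_le_card (delete_subset HX))
    (fun X Y HXY HY => rk_mono HXY (delete_subset HY))
    (fun X Y HX HY => rk_submod (delete_subset HX) (delete_subset HY)).

Definition beta M X : \bar rat :=
  if rk M X == 0%N then +oo%E else ((#|X|%:R / (rk M X)%:R : rat)%:E)%E.

Definition gamma M : \bar rat :=
  \big[Order.max/-oo%E]_(X : {set T} | (X != set0) && (X \subset ground M)) beta M X.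

End Matroids.

(* Call [B] sparse-off when every non-spanning [X \subset E - B] has at most
   [cap r n = floor ((r - 1) (n - r) / r)] elements.  Deleting a sparse-off
   basis works: [E - B] is spanning (it is too big to be non-spanning), and a
   subset of rank [r], [r - 1] or [<= r - 2] is no denser than [E - B],
   respectively by size, by sparseness, and because in a paving matroid sets
   of rank [<= r - 2] are independent.  A sparse-off basis is built from a
   largest non-spanning set [H] (a hyperplane): non-spanning sets not inside
   [H] meet it in at most [r - 2] elements, so it suffices that [B] leaves at
   most [cap] elements of [H]; density of [E] bounds [#|H|] so that such a
   basis, extending [r - (#|H| - cap)] elements outside [H], exists. *)

From mathcomp Require Import all_boot all_order all_algebra.
From mathcomp Require Import constructive_ereal.
From mathcomp Require Import zify.
Set Implicit Arguments. Unset Strict Implicit. Unset Printing Implicit Defensive.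
Import Order.TTheory GRing.Theory Num.Theory.

(* A set of size at least k has a subset of size exactly k: the k-subsets
   of A are counted by the binomial coefficient 'C(#|A|, k) > 0. *)
Lemma subset_of_card (T : finType) (A : {set T}) k :
  k <= #|A| -> exists2 B : {set T}, B \subset A & #|B| = k.
Proof.
rewrite -bin_gt0 -cards_draws => /card_gt0P [B].
by rewrite inE => /andP [sBA /eqP cB]; exists B.
Qed.

Section MatroidFacts.
Variables (T : finType) (M : matroid T).
Local Notation E := (ground M).
Local Notation rk := (rk M).
Local Notation r := (rank M).
Implicit Types (X Y A B C Z : {set T}).

Lemma rk_le_rank X : X \subset E -> rk X <= r.
Proof. by move=> hX; apply: rk_mono. Qed.

Lemma indep0 : indep M set0.
Proof. by rewrite /indep sub0set cards0 -leqn0 -(cards0 T) rk_le_card ?sub0set. Qed.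

(* A set [X] whose rank is smaller than its size contains a circuit: take a
   dependent subset of [X] of minimum size. *)
Lemma circuit_in_dependent X : X \subset E -> ~~ indep M X ->
  exists2 C : {set T}, C \subset X & circuit M C.
Proof.
move=> hXE hX; pose dep (C : {set T}) := (C \subset X) && ~~ indep M C.
have dX : dep X by rewrite /dep subxx.
case: (arg_minnP (fun C : {set T} => #|C|) dX) => C /andP [sCX hC] Cmin.
exists C => //; split => [|//|x xC]; first exact: subset_trans hXE.
apply/negPn/negP => hCx.
have := Cmin (C :\ x); rewrite /dep hCx (subset_trans (subsetDl _ _) sCX).
by rewrite (cardsD1 x C) xC => /(_ isT); rewrite ltnn.
Qed.

(* Closure: if no element of [Z] raises the rank of [A], then neither does
   all of [Z] (by induction on [Z] and submodularity). *)
Lemma rk_closure A Z : A \subset E -> Z \subset E ->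
  (forall z, z \in Z -> rk (z |: A) <= rk A) -> rk (A :|: Z) <= rk A.
Proof.
move=> hA; have [m] := ubnP #|Z|; elim: m Z => // m IH Z hZm hZE hz.
have [->|[z zZ]] := set_0Vmem Z; first by rewrite setU0.
have hZ'E : Z :\ z \subset E := subset_trans (subsetDl _ _) hZE.
have hAZ'E : A :|: (Z :\ z) \subset E by rewrite subUset hA hZ'E.
have hzAE : z |: A \subset E by rewrite subUset sub1set (subsetP hZE) ?hA.
have IHz : rk (A :|: (Z :\ z)) <= rk A.
  apply: IH => [|//|y /setD1P [_ /hz] //].
  by move: hZm; rewrite (cardsD1 z Z) zZ.
have eU : (A :|: (Z :\ z)) :|: (z |: A) = A :|: Z.
  apply/setP => y; rewrite !inE; case: (eqVneq y z) => [->|_] /=.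
    by rewrite zZ !orbT.
  by rewrite orbAC orbb.
have sAI : A \subset (A :|: (Z :\ z)) :&: (z |: A).
  by rewrite subsetI subsetUl subsetUr.
have := rk_mono sAI (subset_trans (subsetIl _ _) hAZ'E).
have := rk_submod hAZ'E hzAE; rewrite eU.
have := hz z zZ; lia.
Qed.

(* Every independent subset [A] of [Y] extends to an independent [B] with
   [A \subset B \subset Y] and [#|B| = rk Y]: a largest such [B] spans [Y]. *)
Lemma indep_extend A Y : A \subset Y -> Y \subset E -> indep M A ->
  exists B, [/\ A \subset B, B \subset Y, indep M B & #|B| = rk Y].
Proof.
move=> sAY hYE iA; pose ok B := [&& A \subset B, B \subset Y & indep M B].
have okA : ok A by rewrite /ok subxx sAY iA.
case: (arg_maxnP (fun B : {set T} => #|B|) okA) => B /and3P [sAB sBY iB] Bmax.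
exists B; split => //; have hBE := subset_trans sBY hYE.
move: (iB) => /andP [_ /eqP rB].
apply/eqP; rewrite eqn_leq -{1}rB (rk_mono sBY hYE) /=.
have no_gain y : y \in Y :\: B -> rk (y |: B) <= rk B.
  case/setDP => yY yB; have hyBE : y |: B \subset E.
    by rewrite subUset sub1set (subsetP hYE) ?hBE.
  have := rk_le_card hyBE; rewrite cardsU1 yB rB add1n leq_eqVlt ltnS.
  case/orP => // /eqP ryB.
  have := Bmax (y |: B); rewrite /ok (subset_trans sAB (subsetUr _ _)).
  rewrite subUset sub1set yY sBY /indep hyBE ryB cardsU1 yB eqxx.
  by move=> /(_ isT) /=; rewrite add1n ltnn.
have := rk_closure hBE (subset_trans (subsetDl _ _) hYE) no_gain.
by rewrite -{2}(setID Y B) (setIidPr sBY) rB.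
Qed.

Lemma basis_of_card B : indep M B -> #|B| = r -> basis M B.
Proof.
move=> iB cB; split => // x xE xB; apply/negP => /andP [hxB /eqP rxB].
by have := rk_le_rank hxB; rewrite rxB cardsU1 xB cB ltnn.
Qed.

End MatroidFacts.

Section Density.
Variables (T : finType) (N : matroid T).
Implicit Types (X Y : {set T}).
Local Open Scope ereal_scope.

Lemma beta_le X Y : rk N X != 0%N -> rk N Y != 0%N ->
  (beta N X <= beta N Y) = (#|X| * rk N Y <= #|Y| * rk N X)%N.
Proof.
move=> hX hY; rewrite /beta (negbTE hX) (negbTE hY) lee_fin.
rewrite ler_pdivrMr ?ltr0n ?lt0n // mulrAC ler_pdivlMr ?ltr0n ?lt0n //.
by rewrite -!natrM ler_nat.
Qed.

Lemma gamma_ge_beta X : X != set0 -> X \subset ground N -> beta N X <= gamma N.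
Proof. by move=> X0 hX; rewrite /gamma (bigD1 X) /= ?X0 ?hX // le_max lexx. Qed.

Lemma gamma_eq_beta_ground : ground N != set0 ->
  (forall X, X != set0 -> X \subset ground N -> beta N X <= beta N (ground N)) ->
  gamma N = beta N (ground N).
Proof.
move=> E0 hle; apply/le_anti; rewrite gamma_ge_beta // andbT.
apply: (big_ind (fun x => x <= beta N (ground N))) => [|x y hx hy|X /andP []].
- exact: leNye.
- by rewrite ge_max hx hy.
- exact: hle.
Qed.

End Density.

Section Paving.
Variables (T : finType) (M : matroid T).
Hypothesis pavingM : paving M.
Local Notation E := (ground M).
Local Notation rk := (rk M).
Local Notation r := (rank M).
Implicit Types (X Y B H : {set T}).

(* In a paving matroid every set with fewer than [r] elements is independent,
   since a dependent set contains a circuit and circuits have [>= r] elements. *)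
Lemma paving_small_indep X : X \subset E -> #|X| < r -> indep M X.
Proof.
move=> hXE cX; apply/negPn/negP => /(circuit_in_dependent hXE) [C sCX /pavingM].
by have := subset_leq_card sCX; lia.
Qed.

Lemma paving_rk_ge X : X \subset E -> minn #|X| r.-1 <= rk X.
Proof.
move=> hXE; have [->|r_pos] := posnP r; first by rewrite minn0.
have [W sWX cW] := subset_of_card (geq_minl #|X| r.-1).
have hWE := subset_trans sWX hXE.
have /andP [_ /eqP rW] : indep M W by apply: paving_small_indep; lia.
by rewrite -cW -rW rk_mono.
Qed.

Lemma paving_low_rank_indep X : X \subset E -> rk X + 2 <= r -> rk X = #|X|.
Proof.
move=> hXE hX; have := paving_rk_ge hXE; have := rk_le_card hXE; lia.
Qed.

Lemma paving_rk_pos X : 2 <= r -> X \subset E -> X != set0 -> 0 < rk X.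
Proof.
move=> hr hXE X0; have := paving_rk_ge hXE.
have : 0 < #|X| by rewrite card_gt0.
lia.
Qed.

Section Hyperplane.
Variable H : {set T}.
Hypotheses (sHE : H \subset E) (rH : rk H <= r.-1).
Hypothesis Hmax : forall Y, Y \subset E -> rk Y <= r.-1 -> #|Y| <= #|H|.

Lemma hyperplane_span Y : Y \subset E -> ~~ (Y \subset H) -> rk (Y :|: H) = r.
Proof.
move=> hYE nYH; have hUE : Y :|: H \subset E by rewrite subUset hYE sHE.
apply/eqP; rewrite eqn_leq rk_le_rank //= leqNgt; apply/negP => hlt.
have /(Hmax hUE) cU : rk (Y :|: H) <= r.-1 by lia.
have /eqP eH : H == Y :|: H by rewrite eqEcard subsetUr cU.
by move: nYH; rewrite eH subsetUl.
Qed.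

(* A non-spanning set not inside [H] meets [H] in at most [r - 2] elements:
   by submodularity [rk (X :&: H) <= (r - 1) + (r - 1) - r]. *)
Lemma hyperplane_meet X : 0 < r -> X \subset E -> rk X <= r.-1 ->
  ~~ (X \subset H) -> #|X :&: H| <= r - 2.
Proof.
move=> r_pos hXE rX nXH; have hIE : X :&: H \subset E := subset_trans (subsetIl _ _) hXE.
have := rk_submod hXE sHE; rewrite hyperplane_span //.
have := paving_low_rank_indep hIE; lia.
Qed.

(* For [0 < k < r] with [r - k] elements outside [H], there is a basis
   with exactly [r - k] elements outside [H]: extend [r - k] such elements
   to a basis of the spanning set [F :|: H]. *)
Lemma basis_through_hyperplane k : 0 < k < r -> r - k <= #|E :\: H| ->
  exists B, [/\ indep M B, #|B| = r & #|B :\: H| = r - k].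
Proof.
move=> /andP [k0 kr] /subset_of_card [F]; rewrite subsetD => /andP [hFE FH] cF.
have nFH : ~~ (F \subset H).
  have /set0Pn [f fF] : F != set0 by rewrite -card_gt0 cF; lia.
  by apply/negP => /subsetP /(_ f fF); move/disjointFr: FH => /(_ f fF) ->.
have iF : indep M F by apply: paving_small_indep; lia.
have hUE : F :|: H \subset E by rewrite subUset hFE sHE.
have [B [sFB sBU iB cB]] := indep_extend (subsetUl F H) hUE iF.
exists B; split => //; first by rewrite cB hyperplane_span.
suff -> : B :\: H = F by [].
apply/eqP; rewrite eqEsubset; apply/andP; split; apply/subsetP => x.
  by case/setDP => /(subsetP sBU); rewrite inE => /orP [] // ->.
by move=> xF; rewrite inE (subsetP sFB) // andbT; move/disjointFr: FH => /(_ x xF) ->.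
Qed.

End Hyperplane.
End Paving.

(* The capacity [cap r n = floor ((r - 1) (n - r) / r)]: a set [X] of rank
   [r - 1] in [M \ B] (ground set of size [n - r]) is no denser than the whole
   ground set exactly when [#|X| <= cap r n]. *)
Definition cap (r n : nat) : nat := (r.-1 * (n - r)) %/ r.

Section Capacity.
Variables r n : nat.
Hypotheses (r_ge3 : 3 <= r) (n_ge : 2 * r + 2 <= n).

Lemma leq_cap x : (x <= cap r n) = (x * r <= r.-1 * (n - r)).
Proof. by rewrite leq_divRL //; lia. Qed.

Lemma cap_floor : cap r n * r <= r.-1 * (n - r) < (cap r n).+1 * r.
Proof. by rewrite -leq_cap leqnn ltn_ceil //; lia. Qed.

Lemma cap_lt : cap r n < n - r.
Proof. by have := cap_floor; nia. Qed.

(* Two disjoint pieces of sizes [r - 2] and [n - r - cap] fit under [cap];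
   this is where [r >= 3] and [n >= 2r + 2] are needed. *)
Lemma cap_double : n - 2 <= 2 * cap r n.
Proof. by have := cap_floor; nia. Qed.

Lemma cap_excess h : r * h <= r.-1 * n -> h - cap r n < r.
Proof. by have := cap_floor; nia. Qed.

End Capacity.

Section SparseBasis.
Variables (T : finType) (M : matroid T).
Hypotheses (pavingM : paving M) (r_ge3 : 3 <= rank M).
Local Notation E := (ground M).
Local Notation rk := (rk M).
Local Notation r := (rank M).
Local Notation n := #|ground M|.
Implicit Types (X Y B H : {set T}).

(* [B] is sparse-off if every non-spanning subset of [E - B] fits under the
   capacity, i.e. is no denser than [E - B] will turn out to be. *)
Definition sparse_off B : Prop :=
  forall X, X \subset E :\: B -> rk X <= r.-1 -> #|X| <= cap r n.

Lemma dense_ground X : gamma M = beta M E -> X \subset E -> X != set0 ->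
  #|X| * r <= n * rk X.
Proof.
move=> dense hXE X0; have rE : rk E != 0 by rewrite -lt0n; apply: leq_trans r_ge3.
have rX : rk X != 0 by rewrite -lt0n paving_rk_pos //; lia.
by rewrite -beta_le // -dense gamma_ge_beta.
Qed.

(* Sparse-off is guaranteed once [B] leaves at most [cap] elements of a
   hyperplane [H], and at most [cap - (r - 2)] elements outside [H]: a
   non-spanning set either lies in [H] or meets it in [<= r - 2] elements. *)
Lemma sparse_off_split H B :
  H \subset E -> rk H <= r.-1 ->
  (forall Y, Y \subset E -> rk Y <= r.-1 -> #|Y| <= #|H|) ->
  #|H :\: B| <= cap r n -> #|(E :\: H) :\: B| + (r - 2) <= cap r n ->
  sparse_off B.
Proof.
move=> sHE rH Hmax cHB cOB X hX rX.
have hXE : X \subset E := subset_trans hX (subsetDl _ _).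
have [sXH|nXH] := boolP (X \subset H).
  apply: leq_trans cHB; apply: subset_leq_card.
  by move: hX; rewrite !subsetD sXH => /andP [].
have cXH := hyperplane_meet pavingM sHE rH Hmax (ltnW (ltnW r_ge3)) hXE rX nXH.
have sXO : X :\: H \subset (E :\: H) :\: B.
  apply/subsetP => x /setDP [xX xH]; have /setDP [xE xB] := subsetP hX x xX.
  by rewrite !inE xH xB xE.
have := subset_leq_card sXO; rewrite -(cardsID H X); lia.
Qed.

(* Let [H] be a largest non-spanning set.  If [#|H|] is
   within capacity any basis works; otherwise a basis containing all but
   [cap] elements of [H] (it exists by density and [basis_through_hyperplane])
   is sparse-off. *)
Lemma exists_sparse_basis : gamma M = beta M E -> 2 * r + 2 <= n ->
  exists B, [/\ indep M B, #|B| = r & sparse_off B].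
Proof.
move=> dense n_ge; pose nonspanning Y := (Y \subset E) && (rk Y <= r.-1).
have ns0 : nonspanning set0.
  by case/andP: (indep0 M) => _ /eqP r0; rewrite /nonspanning sub0set r0 cards0.
case: (arg_maxnP (fun Y : {set T} => #|Y|) ns0) => H /andP [sHE rH] Hlargest.
have Hmax Y : Y \subset E -> rk Y <= r.-1 -> #|Y| <= #|H|.
  by move=> hYE rY; apply: Hlargest; rewrite /nonspanning hYE rY.
have cO : #|E :\: H| = n - #|H| by rewrite cardsD (setIidPr sHE).
have [Hsmall|Hlarge] := leqP #|H| (cap r n).
  have [B [_ _ iB cB]] := indep_extend (sub0set E) (subxx E) (indep0 M).
  exists B; split => // X hX rX; apply: leq_trans Hsmall.
  exact: Hmax (subset_trans hX (subsetDl _ _)) rX.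
have H0 : H != set0 by rewrite -card_gt0; lia.
have Hdense : r * #|H| <= r.-1 * n.
  have := dense_ground dense sHE H0; have := leq_mul (leqnn n) rH; nia.
have excess := cap_excess r_ge3 n_ge Hdense.
have capn := cap_lt r_ge3 n_ge; have cap2 := cap_double r_ge3 n_ge.
have [||B [iB cB cBH]] :=
  basis_through_hyperplane pavingM sHE rH Hmax (k := #|H| - cap r n).
- by apply/andP; split; lia.
- by rewrite cO; lia.
have sBE : B \subset E by case/andP: iB.
exists B; split => //; apply: (sparse_off_split sHE rH Hmax).
- have := cardsID H B; rewrite [#|H :\: B|]cardsD [H :&: B]setIC; lia.
- have := cardsID B (E :\: H); rewrite setIC setIDA (setIidPl sBE) cO; lia.
Qed.

(* Deleting a sparse-off basis [B] keeps the rank and leaves [E - B] as a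
   densest set of [M \ B]: sets of rank [r] have at most [n - r] elements,
   sets of rank [r - 1] are within capacity, and sets of smaller rank are
   independent. *)
Lemma sparse_basis_deletion B : 2 * r + 2 <= n ->
  indep M B -> #|B| = r -> sparse_off B ->
  gamma (delete M B) = beta (delete M B) (E :\: B) /\ rank (delete M B) = r.
Proof.
move=> n_ge /andP [sBE _] cB sparseB.
have cEB : #|E :\: B| = n - r by rewrite cardsD (setIidPr sBE) cB.
have rEB : rk (E :\: B) = r.
  apply/eqP; rewrite eqn_leq rk_le_rank ?subsetDl //= leqNgt; apply/negP => lt_r.
  have := sparseB _ (subxx _) ltac:(lia); rewrite cEB leqNgt.
  by rewrite (cap_lt r_ge3 n_ge).
split => //; apply: gamma_eq_beta_ground => /= [|X X0 hX].
  by rewrite -card_gt0 cEB; lia.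
have hXE : X \subset E := subset_trans hX (subsetDl _ _).
have rX : 0 < rk X by apply: paving_rk_pos => //; lia.
rewrite beta_le /= ?rEB ?cEB -?lt0n //; last by lia.
have := rk_le_rank hXE; have := subset_leq_card hX; rewrite cEB.
case: (ltngtP (rk X) r.-1) => [low|high|top] cX rXr.
- by rewrite (paving_low_rank_indep pavingM hXE); nia.
- have -> : rk X = r by lia.
  by rewrite leq_mul2r cX orbT.
- have := sparseB X hX ltac:(lia); rewrite leq_cap // top; lia.
Qed.

End SparseBasis.

Theorem proposition1 (T : finType) (M : matroid T) :
  paving M ->
  gamma M = beta M (ground M) ->
  (2 * rank M + 2 <= #|ground M|)%N ->
  (3 <= rank M)%N ->
  exists B : {set T},
    basis M B /\
    gamma (delete M B) = beta (delete M B) (ground M :\: B) /\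
    rank (delete M B) = rank M.
Proof.
move=> pavingM dense n_ge r_ge3.
have [B [iB cB sparseB]] := exists_sparse_basis pavingM r_ge3 dense n_ge.
exists B; split; first exact: basis_of_card.
exact: sparse_basis_deletion.
Qed.
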